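(* Let $\mu\in\Delta([N])$, let $(U,\pi)\sim\mathrm{Unif}([0,1])\times\mathrm{Unif}(\Pi)$, and let $Y = \Gamma((U,\pi),\mu)$. Then almost surely $$\frac{1}{C_0}\,\mathrm{Cov}\big(U,\eta(\pi(Y))\mid Y\big) = 1-\mu(Y).$$
   Context: $\Pi$ is the set of permutations of $[N]$ and $\mathrm{Unif}(\Pi)$ the uniform distribution on it (independent of $U$). Decoder: $\Gamma((u,\pi),\mu):=\pi^{-1}(\min\{\pi(i):\mu(\{j:\pi(j)\le\pi(i)\})\ge u\})$. $\eta(i):=(i-1)/(N-1)$ and $C_0:=\mathrm{Var}(\eta(I))$ for $I$ uniform on $[N]$. *)

From HB Require Import structures.
From mathcomp Require Import all_boot all_order all_algebra all_fingroup.
From mathcomp Require Import all_classical all_reals all_analysis.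
Set Implicit Arguments. Unset Strict Implicit. Unset Printing Implicit Defensive.
Import Order.TTheory GRing.Theory Num.Theory.
Local Open Scope ring_scope.
Local Open Scope classical_set_scope.

Section Defs.
Variables (R : realType) (N : nat).

(* [N] is represented by 'I_N = {0,..,N-1}; permutations are {perm 'I_N}. *)

Definition cumul (mu : 'I_N -> R) (pi : {perm 'I_N}) (i : 'I_N) : R :=
  \sum_(j | (pi j <= pi i)%N) mu j.

(* Gamma((u,pi),mu) = pi^{-1}(min{pi(i) : mu({j : pi j <= pi i}) >= u});
   None if the set is empty (a null event). *)
Definition Gamma (mu : 'I_N -> R) (u : R) (pi : {perm 'I_N}) : option 'I_N :=
  [pick i | (u <= cumul mu pi i) &&
            [forall j, (u <= cumul mu pi j) ==> (pi i <= pi j)%N]].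

(* eta on 0-based indices: eta(k) = k/(N-1)  (= paper's (i-1)/(N-1), i = k+1) *)
Definition eta (k : 'I_N) : R := (k : nat)%:R / (N.-1)%:R.

Definition C0 : R :=
  (N%:R)^-1 * (\sum_(k : 'I_N) eta k ^+ 2) - ((N%:R)^-1 * \sum_(k : 'I_N) eta k) ^+ 2.

(* Expectation of g(U,pi) for (U,pi) ~ Unif[0,1] x Unif(Pi) *)
Definition Exp (g : R -> {perm 'I_N} -> R) : R :=
  (#|{perm 'I_N}|%:R)^-1 *
  \sum_(pi : {perm 'I_N})
     Rintegral (@lebesgue_measure R) `[0%R, 1%R] (fun u => g u pi).

Definition indY (mu : 'I_N -> R) (y : 'I_N) (u : R) (pi : {perm 'I_N}) : R :=
  if Gamma mu u pi == Some y then 1 else 0.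

Definition ProbY (mu : 'I_N -> R) (y : 'I_N) : R := Exp (indY mu y).

Definition CondExp (mu : 'I_N -> R) (y : 'I_N) (g : R -> {perm 'I_N} -> R) : R :=
  Exp (fun u pi => g u pi * indY mu y u pi) / ProbY mu y.

Definition CondCov (mu : 'I_N -> R) (y : 'I_N) : R :=
  CondExp mu y (fun u pi => u * eta (pi y))
  - CondExp mu y (fun u _ => u) * CondExp mu y (fun _ pi => eta (pi y)).

End Defs.

From Pilot Require Import Defs.
From HB Require Import structures.
From mathcomp Require Import all_boot all_order all_algebra all_fingroup.
From mathcomp Require Import all_classical all_reals all_analysis.
From mathcomp Require Import ring.
Import Order.TTheory GRing.Theory Num.Theory.
Import numFieldNormedType.Exports.
Local Open Scope ring_scope.
Local Open Scope classical_set_scope.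

(* Given pi, the decoder returns y exactly when U falls in the interval
   (S, S + mu y] of length mu y, where S is the mu-mass that pi ranks before y.
   So P(Y = y | pi) = mu y, pi stays uniform given Y = y, and given (Y = y, pi)
   U is uniform on that interval, with mean S + mu y / 2.  The covariance thus
   reduces to Cov(S, eta (pi y)) under a uniform pi.  By symmetry, given pi y
   each j <> y is ranked before y with probability eta (pi y), so
   E[S | pi y] = (1 - mu y) eta (pi y), and the covariance is
   (1 - mu y) Var(eta (pi y)) = (1 - mu y) C0 since pi y is uniform. *)

Lemma affine_continuous (R : realType) (al be : R) : continuous (fun x : R => al * x + be).
Proof.
by move=> x; apply: cvgD; [apply: cvgM; [exact: cvg_cst | exact: cvg_id] | exact: cvg_cst].
Qed.

Lemma Rintegral_affine (R : realType) (a b al be : R) : a <= b ->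
  \int[@lebesgue_measure R]_(x in `[a, b]) (al * x + be) =
  (b - a) * (al * (a + b) / 2 + be).
Proof.
rewrite le_eqVlt => /predU1P[<-|ab].
  by rewrite set_itv1 Rintegral_set1 subrr mul0r.
pose F x := al * (x ^+ 2 / 2) + be * x.
have dF (x : R) : is_derive x (1 : R) F (al * x + be).
  apply: is_derive_eq.
  by rewrite !scaler0 add0r /GRing.scale /= !mulr1; field.
have cF : continuous F.
  by move=> x; apply: differentiable_continuous; apply/derivable1_diffP; exact: ex_derive.
rewrite /Rintegral (@continuous_FTC2 _ _ F) /=.
- by rewrite /F; field.
- exact: ab.
- by apply: continuous_in_subspaceT => x _; exact: affine_continuous.
- split; first by move=> x _; exact: ex_derive.
    exact: cvg_at_right_filter (cF a).
  exact: cvg_at_left_filter (cF b).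
- by move=> x _; rewrite derive1E derive_val.
Qed.

Lemma Rintegral_affine_obnd (R : realType) (a b al be : R) : a <= b ->
  \int[@lebesgue_measure R]_(x in `]a, b]) (al * x + be) =
  (b - a) * (al * (a + b) / 2 + be).
Proof.
move=> ab; rewrite Rintegral_itv_obnd_cbnd ?Rintegral_affine //.
have ab_int : (@lebesgue_measure R).-integrable `[a, b] (EFin \o fun x => al * x + be).
  apply: continuous_compact_integrable; first exact: segment_compact.
  by apply: continuous_in_subspaceT => x _; exact: affine_continuous.
by apply: integrableS ab_int => //; apply: subset_itvr; rewrite bnd_simp.
Qed.

Section PermSymmetry.
Context {V : nmodType} {T : finType}.
Implicit Types (f : T -> V).

Lemma sum_perm_eval_indep f x x' :
  \sum_(s : {perm T}) f (s x) = \sum_(s : {perm T}) f (s x').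
Proof.
rewrite (reindex_inj (mulgI (tperm x x'))) /=.
by apply: eq_bigr => s _; rewrite permM tpermL.
Qed.

Lemma sum_perm_eval f x :
  (\sum_(s : {perm T}) f (s x)) *+ #|T| = (\sum_t f t) *+ #|{perm T}|.
Proof.
transitivity (\sum_(x' : T) \sum_(s : {perm T}) f (s x')).
  by rewrite -sumr_const; apply: eq_bigr => x' _; exact: sum_perm_eval_indep.
rewrite exchange_big -sumr_const; apply: eq_bigr => s _.
by rewrite [RHS](reindex_inj (@perm_inj _ s)).
Qed.

Lemma sum_perm_eval2_indep (F : T -> T -> V) [x j j'] : j != x -> j' != x ->
  \sum_(s : {perm T}) F (s j) (s x) = \sum_(s : {perm T}) F (s j') (s x).
Proof.
move=> jx j'x; rewrite (reindex_inj (mulgI (tperm j j'))) /=.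
by apply: eq_bigr => s _; rewrite !permM tpermL (tpermD jx j'x).
Qed.

End PermSymmetry.

Lemma sum_rank_lt (V : nmodType) (N k : nat) (s : {perm 'I_N}) (c : V) :
  (k <= N)%N -> \sum_(j | (s j < k)%N) c = c *+ k.
Proof.
move=> kN; rewrite (reindex_inj (@perm_inj _ s^-1)) /=.
under eq_bigl => j do rewrite permKV.
by rewrite -(big_ord_widen _ (fun _ => c) kN) sumr_const card_ord.
Qed.

Section Ranking.
Context {R : realType} {N : nat} (mu : 'I_N -> R).
Hypothesis mu_ge0 : forall i, 0 <= mu i.
Implicit Types (pi : {perm 'I_N}) (y j : 'I_N) (u : R).

Definition mass_before pi y : R := \sum_(j | (pi j < pi y)%N) mu j.

Lemma mass_before_ge0 pi y : 0 <= mass_before pi y.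
Proof. by apply: sumr_ge0 => j _; exact: mu_ge0. Qed.

Lemma mass_before_rank0 pi y : pi y = 0%N :> nat -> mass_before pi y = 0.
Proof. by move=> py0; rewrite /mass_before big_pred0 // => j; rewrite py0. Qed.

Lemma cumul_mass_before pi y : cumul mu pi y = mass_before pi y + mu y.
Proof.
rewrite /cumul (bigD1 y) //= addrC; congr (_ + _).
apply: eq_bigl => j; rewrite ltn_neqAle andbC; congr (_ && _).
by rewrite (inj_eq val_inj) (inj_eq perm_inj).
Qed.

Lemma cumul_rank_pred [pi y j] : pi y = (pi j).+1 :> nat ->
  cumul mu pi j = mass_before pi y.
Proof. by move=> pyS; apply: eq_bigl => k; rewrite pyS ltnS. Qed.

Lemma cumul_le_mass_before [pi y j] : (pi j < pi y)%N ->
  cumul mu pi j <= mass_before pi y.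
Proof.
move=> jy; rewrite /cumul /mass_before [leRHS]big_mkcond [leLHS]big_mkcond.
apply: ler_sum => k _; case: ifP => kj; first by rewrite (leq_ltn_trans kj jy).
by case: ifP => _ //; exact: mu_ge0.
Qed.

Lemma cumul_le_sum pi y : cumul mu pi y <= \sum_i mu i.
Proof.
rewrite /cumul [leLHS]big_mkcond; apply: ler_sum => k _.
by case: ifP => _ //; exact: mu_ge0.
Qed.

Lemma Gamma_SomeE u pi y : (Gamma mu u pi == Some y) =
  (u <= cumul mu pi y) && [forall j, (u <= cumul mu pi j) ==> (pi y <= pi j)%N].
Proof.
rewrite /Gamma; case: pickP => [x /andP[ux /forallP min_x]|none]; last first.
  by apply/esym; exact: none.
apply/eqP/andP => [[<-]|[uy /forallP min_y]]; first by split; [|apply/forallP].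
congr Some; apply: (@perm_inj _ pi); apply/ord_inj/anti_leq.
by rewrite (implyP (min_x y) uy) (implyP (min_y x) ux).
Qed.

Lemma Gamma_Some_itv u pi y : (Gamma mu u pi == Some y) =
  (u <= mass_before pi y + mu y) && ((pi y == 0%N :> nat) || (mass_before pi y < u)).
Proof.
rewrite Gamma_SomeE cumul_mass_before.
apply/andP/andP => [[uy /forallP min_y] | [uy rank_y]]; split => //.
  case: (posnP (pi y)) => [// | py_gt0]; rewrite /= ltNge; apply/negP => uS.
  have pred_lt : ((pi y).-1 < N)%N by rewrite (leq_ltn_trans (leq_pred _)).
  pose j0 := (pi^-1)%g (Ordinal pred_lt).
  have pyS : pi y = (pi j0).+1 :> nat by rewrite permKV /= prednK.
  have := implyP (min_y j0); rewrite (cumul_rank_pred pyS) => /(_ uS).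
  by rewrite pyS ltnn.
apply/forallP => j; apply/implyP => uj; rewrite leqNgt; apply/negP => jy.
case/orP: rank_y => [/eqP py0 | Su]; first by rewrite py0 in jy.
by have := lt_le_trans Su (le_trans uj (cumul_le_mass_before jy)); rewrite ltxx.
Qed.

End Ranking.

Section UniformPermutation.
Context {R : realType} {N : nat}.
Local Notation eta := (@Defs.eta R N).
Implicit Types (y j : 'I_N) (f : 'I_N -> R).

Definition mean f : R := (N%:R)^-1 * \sum_k f k.

Lemma meanZ c f : mean (fun k => c * f k) = c * mean f.
Proof. by rewrite /mean -mulr_sumr mulrCA. Qed.

Lemma mean_cst c : (0 < N)%N -> mean (fun _ => c) = c.
Proof.
by move=> N_gt0; rewrite /mean sumr_const card_ord -[c *+ N]mulr_natl mulKf // pnatr_eq0 -lt0n.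
Qed.

Lemma sum_perm_eval_mean f y : (0 < N)%N ->
  \sum_(pi : {perm 'I_N}) f (pi y) = #|{perm 'I_N}|%:R * mean f.
Proof.
move=> N_gt0; have N_neq0 : N%:R != 0 :> R by rewrite pnatr_eq0 -lt0n.
apply: (mulfI N_neq0); rewrite mulrCA /mean mulVKf // !mulr_natl.
by have := sum_perm_eval f y; rewrite card_ord.
Qed.

Lemma sum_perm_lt_eta f y j : (2 <= N)%N -> j != y ->
  \sum_(pi : {perm 'I_N}) (if (pi j < pi y)%N then f (pi y) else 0) =
  \sum_(pi : {perm 'I_N}) f (pi y) * eta (pi y).
Proof.
move=> N_ge2 jy; have N1_neq0 : N.-1%:R != 0 :> R.
  by rewrite pnatr_eq0 -lt0n -ltnS prednK ?(ltnW N_ge2).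
apply: (mulfI N1_neq0).
(* The left side does not depend on j <> y; summing it over the N - 1 such j
   counts, for each pi, the pi y elements ranked before y. *)
pose before i := \sum_(pi : {perm 'I_N}) (if (pi i < pi y)%N then f (pi y) else 0).
transitivity (\sum_(i | i != y) before i).
  rewrite [RHS](eq_bigr (fun=> before j)).
    by rewrite sumr_const cardC1 card_ord mulr_natl.
  move=> i iy.
  exact: (sum_perm_eval2_indep (fun a b : 'I_N => if (a < b)%N then f b else 0) iy jy).
rewrite /before exchange_big mulr_sumr; apply: eq_bigr => pi _.
rewrite -big_mkcondr /= (eq_bigl (fun j' => (pi j' < pi y)%N)); last first.
  by move=> j'; case: eqVneq => [->|]; rewrite ?ltnn.
rewrite sum_rank_lt; last exact/ltnW/ltn_ord.
by rewrite -mulr_natr /eta; field.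
Qed.

Lemma sum_perm_mass_before (mu : 'I_N -> R) f y : \sum_i mu i = 1 -> (2 <= N)%N ->
  \sum_(pi : {perm 'I_N}) f (pi y) * mass_before mu pi y =
  (1 - mu y) * \sum_(pi : {perm 'I_N}) f (pi y) * eta (pi y).
Proof.
move=> mu_sum1 N_ge2.
transitivity (\sum_j mu j * \sum_(pi : {perm 'I_N}) (if (pi j < pi y)%N then f (pi y) else 0)).
  under eq_bigr => pi _ do rewrite /mass_before big_mkcond mulr_sumr.
  rewrite exchange_big; apply: eq_bigr => j _; rewrite mulr_sumr; apply: eq_bigr => pi _.
  by case: ifP; rewrite ?mulr0 // mulrC.
rewrite (bigD1 y) //= [X in mu y * X]big1 ?mulr0 ?add0r => [|pi _]; last by rewrite ltnn.
have -> : 1 - mu y = \sum_(j | j != y) mu j.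
  by rewrite -mu_sum1 (bigD1 y) //= addrAC subrr add0r.
by rewrite mulr_suml; apply: eq_bigr => j jy; rewrite sum_perm_lt_eta.
Qed.

End UniformPermutation.

Section Variance.
Context {R : realFieldType} {T : finType}.

Lemma sqr_sum_lt_card_mul_sum_sqr (a : T -> R) [i j] :
  a i != a j -> (\sum_k a k) ^+ 2 < #|T|%:R * \sum_k a k ^+ 2.
Proof.
move=> aij; set A1 := \sum_k a k; set A2 := \sum_k a k ^+ 2.
have lagrange : \sum_k \sum_l (a k - a l) ^+ 2 = 2 * (#|T|%:R * A2 - A1 ^+ 2).
  rewrite (eq_bigr (fun k => #|T|%:R * a k ^+ 2 + A2 - 2 * (a k * A1))); last first.
    move=> k _; rewrite (eq_bigr (fun l => a k ^+ 2 + a l ^+ 2 - 2 * (a k * a l))).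
      by rewrite sumrB big_split /= sumr_const -!mulr_sumr [#|T|%:R * _]mulr_natl.
    by move=> l _; ring.
  rewrite sumrB big_split /= sumr_const -!mulr_sumr -mulr_suml -[A2 *+ _]mulr_natl.
  by rewrite -/A1 -/A2 !cardT; ring.
rewrite -subr_gt0 -(pmulr_rgt0 _ (ltr0Sn R 1)) -lagrange.
have ij : i != j by apply: contraNneq aij => ->.
apply: (@lt_le_trans _ _ ((a i - a j) ^+ 2)).
  by rewrite lt_def sqr_ge0 sqrf_eq0 subr_eq0 aij.
rewrite (bigD1 i) //= (bigD1 j) //= -addrA lerDl.
by rewrite addr_ge0 ?sumr_ge0 // => *; rewrite ?sumr_ge0 // => *; exact: sqr_ge0.
Qed.

End Variance.

Lemma C0_gt0 (R : realType) (N : nat) : (2 <= N)%N -> 0 < C0 R N.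
Proof.
move=> N_ge2; have N_gt0 : (0 < N)%N by rewrite ltnW.
have N1_lt : (N.-1 < N)%N by rewrite prednK.
have N1_neq0 : N.-1%:R != 0 :> R by rewrite pnatr_eq0 -lt0n -ltnS prednK.
have eta_ends : Defs.eta R (Ordinal N_gt0) != Defs.eta R (Ordinal N1_lt).
  by rewrite /Defs.eta /= mul0r divff // eq_sym oner_eq0.
have := sqr_sum_lt_card_mul_sum_sqr (@Defs.eta R N) eta_ends.
rewrite card_ord -subr_gt0 => var_gt0.
have N_pos : 0 < N%:R :> R by rewrite ltr0n.
rewrite -(pmulr_rgt0 _ (exprn_gt0 2 N_pos)) /C0.
by congr (0 < _): var_gt0; field; rewrite lt0r_neq0.
Qed.

Section Conditioning.
Context {R : realType} {N : nat} {mu : 'I_N -> R} (y : 'I_N).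
Hypotheses (mu_ge0 : forall i, 0 <= mu i) (mu_sum1 : \sum_i mu i = 1).
Local Notation eta := (@Defs.eta R N).

Lemma Rintegral_indY (al be : R) (pi : {perm 'I_N}) :
  \int[@lebesgue_measure R]_(u in `[0, 1]) ((al * u + be) * indY mu y u pi) =
  mu y * (al * mass_before mu pi y + mu y / 2 * al + be).
Proof.
set S := mass_before mu pi y.
have S_ge0 : 0 <= S by exact: mass_before_ge0.
have Sm_le1 : S + mu y <= 1 by rewrite -cumul_mass_before -mu_sum1 cumul_le_sum.
(* At u = 0 the decoder returns the first-ranked element, whence a closed left end. *)
pose I := Interval (if pi y == 0%N :> nat then BLeft S else BRight S) (BRight (S + mu y)).
have I01 : [set` I] `<=` `[0, 1].
  by apply: subset_itv; [case: ifP | ]; rewrite bnd_simp.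
have indY_itv : {in `[0, 1], (fun u => (al * u + be) * indY mu y u pi) =1
                               (fun u => al * u + be) \_ [set` I]}.
  move=> u; rewrite inE /= in_itv /= => /andP[u_ge0 _].
  rewrite patchE mem_setE /indY Gamma_Some_itv // /I in_itv -/S.
  case: eqP => [py0 | _] /=.
    have S0 : S = 0 by exact: mass_before_rank0.
    by rewrite S0 add0r u_ge0 andbT; case: ifP; rewrite ?mulr1 ?mulr0.
  by rewrite andbC; case: ifP; rewrite ?mulr1 ?mulr0.
transitivity
  (\int[@lebesgue_measure R]_(u in `[0, 1]) ((fun u => al * u + be) \_ [set` I]) u).
  exact: eq_Rintegral.
rewrite -Rintegral_mkcondr setIidr // /I.
by case: ifP => _; rewrite ?Rintegral_affine ?Rintegral_affine_obnd ?lerDl ?mu_ge0 //; field.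
Qed.

Hypothesis N_ge2 : (2 <= N)%N.
Let N_gt0 : (0 < N)%N := ltnW N_ge2.

Lemma Exp_affine_indY (al be : 'I_N -> R) (g : R -> {perm 'I_N} -> R) :
  (forall u pi, g u pi = (al (pi y) * u + be (pi y)) * indY mu y u pi) ->
  Exp g =
  mu y * ((1 - mu y) * mean (fun k => al k * eta k) + mu y / 2 * mean al + mean be).
Proof.
move=> g_affine.
have K_neq0 : #|{perm 'I_N}|%:R != 0 :> R by rewrite pnatr_eq0 -lt0n card_Sn fact_gt0.
rewrite /Exp (eq_bigr (fun pi : {perm 'I_N} => mu y *
    (al (pi y) * mass_before mu pi y + mu y / 2 * al (pi y) + be (pi y)))); last first.
  by move=> pi _; rewrite -Rintegral_indY; apply: eq_Rintegral => u _; exact: g_affine.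
rewrite -mulr_sumr !big_split /= -mulr_sumr sum_perm_mass_before //.
rewrite (sum_perm_eval_mean (fun k => al k * eta k)) ?sum_perm_eval_mean //.
(* Abstracted so that field does not try to evaluate the cardinal. *)
by move: (#|{perm 'I_N}|%:R) K_neq0 => K K_neq0; field.
Qed.

Lemma ProbY_eq : ProbY mu y = mu y.
Proof.
rewrite /ProbY (Exp_affine_indY (fun _ => 0) (fun _ => 1)); last first.
  by move=> u pi; rewrite mul0r add0r mul1r.
by rewrite meanZ !mean_cst //; ring.
Qed.

Lemma CondExp_affine (al be : 'I_N -> R) (g : R -> {perm 'I_N} -> R) : mu y != 0 ->
  (forall u pi, g u pi = al (pi y) * u + be (pi y)) ->
  CondExp mu y g =
  (1 - mu y) * mean (fun k => al k * eta k) + mu y / 2 * mean al + mean be.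
Proof.
move=> my_neq0 g_affine; rewrite /CondExp ProbY_eq (Exp_affine_indY al be).
  by rewrite mulrC mulKf.
by move=> u pi; rewrite g_affine.
Qed.

Lemma CondCov_eq : mu y != 0 -> CondCov mu y = (1 - mu y) * C0 R N.
Proof.
move=> my_neq0.
have E_Ueta : CondExp mu y (fun u pi => u * eta (pi y)) =
    (1 - mu y) * mean (fun k => eta k * eta k) + mu y / 2 * mean eta.
  rewrite (CondExp_affine eta (fun _ => 0)) //.
    by rewrite mean_cst // addr0.
  by move=> u pi; rewrite mulrC addr0.
have E_U : CondExp mu y (fun u _ => u) = (1 - mu y) * mean eta + mu y / 2.
  rewrite (CondExp_affine (fun _ => 1) (fun _ => 0)) //.
    by rewrite meanZ !mean_cst // mul1r mulr1 addr0.
  by move=> u pi; rewrite mul1r addr0.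
have E_eta : CondExp mu y (fun _ pi => eta (pi y)) = mean eta.
  rewrite (CondExp_affine (fun _ => 0) eta) //.
    by rewrite meanZ mean_cst // mul0r !mulr0 !add0r.
  by move=> u pi; rewrite mul0r add0r.
have -> : C0 R N = mean (fun k => eta k * eta k) - mean eta ^+ 2 by [].
by rewrite /CondCov E_Ueta E_U E_eta; ring.
Qed.

End Conditioning.

Theorem lemma9 (R : realType) (N : nat) (hN : (2 <= N)%N)
  (mu : 'I_N -> R) (hmu0 : forall i, 0 <= mu i) (hmu1 : \sum_i mu i = 1)
  (y : 'I_N) (hy : 0 < ProbY mu y) :
  CondCov mu y / C0 R N = 1 - mu y.
Proof.
have my_neq0 : mu y != 0 by rewrite -(ProbY_eq y hmu0 hmu1 hN) lt0r_neq0.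
by rewrite (CondCov_eq y hmu0 hmu1 hN my_neq0) mulfK // lt0r_neq0 // C0_gt0.
Qed.
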